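(* Let $n\ge1$. (i) Any $k\ge1$ points of $A_n$ have, altogether, at least $k$ coordinates that are not coordinates of any point of $D_{n-1}$. (ii) For any single point $a_i\in D_{n-1}$, any $k\ge1$ points of $A_n$ have, altogether, at least $k+1$ coordinates that are not coordinates of $a_i$.
   Context: Let $X_1,X_2,X_3$ be pairwise disjoint nonempty sets and $\Omega=X_1\times X_2\times X_3$, with projections $\Pi_i:\Omega\to X_i$. For $S\subset\Omega$, the coordinates of $S$ are the elements of $\Pi_1S\cup\Pi_2S\cup\Pi_3S$. Construction: fix pairwise distinct elements $x_1,y_1,\alpha_{5k-4},\alpha_{5k-1}$ ($k\ge1$) of $X_1$; pairwise distinct elements $x_2,y_2,\alpha_{5k-3},\alpha_{5k}$ ($k\ge1$) of $X_2$; pairwise distinct elements $x_3,z_3,\alpha_{5k-2}$ ($k\ge1$) of $X_3$. Set the convention $\alpha_{-3}:=y_2$, $\alpha_{-2}:=z_3$. Define $a_1=(x_1,x_2,x_3)$, $a_2=(y_1,y_2,x_3)$, $a_3=(y_1,x_2,z_3)$ and for $n\ge1$: $a_{5n-1}=(\alpha_{5n-4},\alpha_{5n-3},\alpha_{5n-2})$, $a_{5n}=(\alpha_{5n-1},\alpha_{5n},\alpha_{5n-2})$, $a_{5n+1}=(\alpha_{5n-4},\alpha_{5n},\alpha_{5n-7})$, $a_{5n+2}=(\alpha_{5n-1},\alpha_{5n-3},x_3)$, $a_{5n+3}=(x_1,\alpha_{5n-8},\alpha_{5n-2})$. Let $T=\{a_i:i\ge1\}$, $D_n=\{a_1,\dots,a_{5n+3}\}$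 for $n\ge0$, $A_0=D_0$ and $A_n=D_n\setminus D_{n-1}$ for $n\ge1$. *)

From mathcomp Require Import all_boot.
Set Implicit Arguments. Unset Strict Implicit. Unset Printing Implicit Defensive.

Section Construction.
Variables (X1 X2 X3 : eqType).

Definition Omega := (X1 * X2 * X3)%type.
(* Coordinates live in the disjoint union X1 + X2 + X3 (the X_i are pairwise
   disjoint, so their union is their disjoint union). *)
Definition Coord := ((X1 + X2) + X3)%type.

Definition coords_pt (p : Omega) : seq Coord :=
  [:: inl (inl p.1.1); inl (inr p.1.2); inr p.2].

Definition coords (S : seq Omega) : seq Coord := undup (flatten (map coords_pt S)).

Variables (x1 y1 : X1) (x2 y2 : X2) (x3 z3 : X3).
(* alpha_m for m = 1,4 mod 5 is al1 m : X1; m = 2,0 mod 5 is al2 m : X2;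
   m = 3 mod 5 is al3 m : X3 (values at other indices are irrelevant). *)
Variables (al1 : nat -> X1) (al2 : nat -> X2) (al3 : nat -> X3).

(* alpha_{5n-7} (an X3 element), with alpha_{-2} := z3 *)
Definition al3m7 (n : nat) : X3 := if n == 1 then z3 else al3 (5 * n - 7).
(* alpha_{5n-8} (an X2 element), with alpha_{-3} := y2 *)
Definition al2m8 (n : nat) : X2 := if n == 1 then y2 else al2 (5 * n - 8).

(* pt n r = a_{5n-1+r} for n >= 1, r < 5 *)
Definition pt (n r : nat) : Omega :=
  match r with
  | 0 => (al1 (5*n-4), al2 (5*n-3), al3 (5*n-2))
  | 1 => (al1 (5*n-1), al2 (5*n), al3 (5*n-2))
  | 2 => (al1 (5*n-4), al2 (5*n), al3m7 n)
  | 3 => (al1 (5*n-1), al2 (5*n-3), x3)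
  | _ => (x1, al2m8 n, al3 (5*n-2))
  end.

Definition a (i : nat) : Omega :=
  match i with
  | 1 => (x1, x2, x3)
  | 2 => (y1, y2, x3)
  | 3 => (y1, x2, z3)
  | _ => pt ((i + 1) %/ 5) ((i + 1) %% 5)
  end.

Definition D (n : nat) : seq Omega := [seq a i | i <- iota 1 (5 * n + 3)].
Definition A (n : nat) : seq Omega :=
  if n == 0 then D 0 else [seq p <- D n | p \notin D n.-1].

End Construction.

From HB Require Import structures.
From mathcomp Require Import all_boot zify.
Set Implicit Arguments. Unset Strict Implicit. Unset Printing Implicit Defensive.

(* Let b_r = a_{5n-1+r} (r < 5) be the five points of A_n.  Their coordinates
   alpha_{5n-4}, ..., alpha_{5n} are new (they do not occur in D_{n-1}), and
   the assignment  b_0 -> alpha_{5n-4}, b_1 -> alpha_{5n-1}, b_2 -> alpha_{5n},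
   b_3 -> alpha_{5n-3}, b_4 -> alpha_{5n-2}  is an injective choice of a new
   coordinate for each point: this gives (i).  For (ii), a point a_i of D_{n-1}
   misses x1 or alpha_{5n-8}, both coordinates of b_4; letting b_4 take that
   coordinate e frees alpha_{5n-2}, and for every point b_{r0} one finds a
   rematching of all five points together with one further coordinate of b_{r0},
   six distinct coordinates outside a_i.  Both parts are instances of a
   counting lemma for injective choices of coordinates ([matching_bound]).
   All distinctness questions are settled on a symbolic copy of the
   construction, whose coordinates are names x, y, alpha_m (type [sym]) that
   carry their index m; the hypotheses of the theorem say exactly that the
   realization of the names in X1, X2, X3 is injective, so every comparison of
   coordinates becomes arithmetic on indices. *)

Lemma coordsP (X1 X2 X3 : eqType) (S : seq (Omega X1 X2 X3)) c :
  reflect (exists2 p, p \in S & c \in coords_pt p) (c \in coords S).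
Proof. rewrite /coords mem_undup; exact: flatten_mapP. Qed.

Lemma matching_bound (I T U : eqType) (ix : seq I) (P : I -> T) (m : I -> U)
    (S : seq T) (E L : seq U) :
  uniq S -> {subset S <= map P ix} -> uniq (E ++ map m ix) -> {subset E <= L} ->
  (forall i, i \in ix -> P i \in S -> m i \in L) ->
  size S + size E <= size L.
Proof.
move=> uS SP uEm EL mL; set J := [seq i <- ix | P i \in S].
have SJ : size S <= size J.
  rewrite -(size_map P); apply: uniq_leq_size => // p pS.
  by have /mapP[i ix_i pE] := SP p pS; rewrite pE map_f // mem_filter -pE pS.
apply: (@leq_trans (size (E ++ map m J))); first by rewrite size_cat size_map addnC leq_add2l.
apply: uniq_leq_size.
  by apply: subseq_uniq uEm; rewrite cat_subseq // map_subseq // filter_subseq.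
move=> c; rewrite mem_cat => /orP[/EL // | /mapP[i]].
by rewrite mem_filter => /andP[Si ix_i] ->; exact: mL.
Qed.

Section Layers.
Variables (X1 X2 X3 : eqType) (x1 y1 : X1) (x2 y2 : X2) (x3 z3 : X3)
  (al1 : nat -> X1) (al2 : nat -> X2) (al3 : nat -> X3).

Lemma a_pt i : 4 <= i -> exists q r, [/\ 0 < q, r < 5, i + 1 = 5 * q + r &
  a x1 y1 x2 y2 x3 z3 al1 al2 al3 i = pt x1 y2 x3 z3 al1 al2 al3 q r].
Proof.
move=> i4; exists ((i + 1) %/ 5), ((i + 1) %% 5); split; try lia.
by case: i i4 => [|[|[|[|i]]]].
Qed.

Lemma D_succ n : 0 < n ->
  D x1 y1 x2 y2 x3 z3 al1 al2 al3 n = D x1 y1 x2 y2 x3 z3 al1 al2 al3 n.-1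
    ++ [seq pt x1 y2 x3 z3 al1 al2 al3 n r | r <- iota 0 5].
Proof.
move=> n0; rewrite /D (_ : 5 * n + 3 = (5 * n.-1 + 3) + 5); last lia.
rewrite iotaD map_cat; congr (_ ++ _).
rewrite (_ : iota _ 5 = map (addn (5 * n - 1)) (iota 0 5)); last first.
  by rewrite -iotaDl; congr iota; lia.
rewrite -map_comp; apply/eq_in_map => r; rewrite mem_iota => /andP[_ r5] /=.
have [q [r' [_ r'5 iqr ->]]] := @a_pt (5 * n - 1 + r) ltac:(lia).
by have [-> ->] : q = n /\ r' = r by lia.
Qed.

Lemma A_sub n : 0 < n ->
  {subset A x1 y1 x2 y2 x3 z3 al1 al2 al3 n <= [seq pt x1 y2 x3 z3 al1 al2 al3 n r | r <- iota 0 5]}.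
Proof.
move=> n0 p; rewrite /A eqn0Ngt n0 mem_filter => /andP[pD].
by rewrite D_succ // mem_cat (negbTE pD).
Qed.
End Layers.

(* Symbolic names of coordinates: SX and SY stand for x_k and y_k (or z3),
   SA m for alpha_m. *)
Inductive sym := SX | SY | SA of nat.

Definition sym_eqb (s t : sym) : bool :=
  match s, t with
  | SX, SX | SY, SY => true
  | SA m, SA m' => m == m'
  | _, _ => false
  end.

Lemma sym_eqP : Equality.axiom sym_eqb.
Proof. by case=> [||m] [||m'] /=; apply: (iffP idP) => // [/eqP -> | [->]]. Qed.

HB.instance Definition _ := hasDecEq.Build sym sym_eqP.

Definition sym_val (X : Type) (x y : X) (f : nat -> X) (s : sym) : X :=
  match s with SX => x | SY => y | SA m => f m end.

Definition sym_ok (ok : pred nat) (s : sym) : bool :=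
  if s is SA m then ok m else true.

Definition sym_index (s : sym) : nat := if s is SA m then m else 0.

Definition sort_ok (res : pred nat) : pred nat := fun m => (0 < m) && res (m %% 5).

Definition res1 : pred nat := fun r => r \in [:: 1; 4].
Definition res2 : pred nat := fun r => r \in [:: 2; 0].
Definition res3 : pred nat := fun r => r == 3.

Lemma sym_val_inj (X : eqType) (x y : X) (f : nat -> X) (res : pred nat) :
  x != y ->
  (forall m m', 0 < m -> 0 < m' -> res (m %% 5) -> res (m' %% 5) -> f m = f m' -> m = m') ->
  (forall m, 0 < m -> res (m %% 5) -> (f m != x) && (f m != y)) ->
  forall s s', sym_ok (sort_ok res) s -> sym_ok (sort_ok res) s' ->
  sym_val x y f s = sym_val x y f s' -> s = s'.
Proof.
move=> xy f_inj f_new [||m] [||m'] //= ok_s ok_s' E.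
all: try case/andP: ok_s => m0 mres; try case/andP: ok_s' => m'0 m'res.
- by rewrite E eqxx in xy.
- by move: (f_new m' m'0 m'res); rewrite E eqxx.
- by rewrite E eqxx in xy.
- by move: (f_new m' m'0 m'res); rewrite E eqxx andbF.
- by move: (f_new m m0 mres); rewrite E eqxx.
- by move: (f_new m m0 mres); rewrite E eqxx andbF.
- by rewrite (f_inj m m').
Qed.

Notation SCoord := (Coord sym sym sym).
Notation SOmega := (Omega sym sym sym).

Definition coord_ok (c : SCoord) : bool :=
  match c with
  | inl (inl s) => sym_ok (sort_ok res1) s
  | inl (inr s) => sym_ok (sort_ok res2) s
  | inr s => sym_ok (sort_ok res3) s
  end.

Definition coord_index (c : SCoord) : nat :=
  match c with inl (inl s) | inl (inr s) | inr s => sym_index s end.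

Lemma coord_eqE (c c' : SCoord) : (c == c') =
  match c, c' with
  | inl (inl s), inl (inl s') | inl (inr s), inl (inr s') | inr s, inr s' => sym_eqb s s'
  | _, _ => false
  end.
Proof. by case: c c' => [[s|s]|s] [[s'|s']|s']; rewrite !eqE. Qed.

Definition coord_below (q : nat) (c : SCoord) : bool :=
  coord_ok c && (coord_index c <= 5 * q).

Definition spt : nat -> nat -> SOmega := pt SX SY SX SY SA SA SA.
Definition sa : nat -> SOmega := a SX SY SX SY SX SY SA SA SA.
Definition sD : nat -> seq SOmega := D SX SY SX SY SX SY SA SA SA.

Lemma spt_coords q r : 0 < q -> r < 5 -> all (coord_below q) (coords_pt (spt q r)).
Proof.
move=> q0; case: r => [|[|[|[|[|r]]]]] // _; rewrite /= /coord_below /al3m7 /al2m8;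
  try case: (q =P 1) => [->|q1]; rewrite /= /sort_ok /res1 /res2 /res3 ?inE; lia.
Qed.

Lemma sa_spt i : 4 <= i ->
  exists q r, [/\ 0 < q, r < 5, i + 1 = 5 * q + r & sa i = spt q r].
Proof. exact: a_pt. Qed.

Lemma coord_ok_spt q r c : 0 < q -> r < 5 -> c \in coords_pt (spt q r) -> coord_ok c.
Proof. by move=> q0 r5 /(allP (spt_coords q0 r5)) /andP[]. Qed.

Lemma sa_coords i : 0 < i -> all (coord_below ((i + 1) %/ 5)) (coords_pt (sa i)).
Proof.
move=> i0; case: (ltnP i 4) => [i4 | /sa_spt[q [r [q0 r5 iqr ->]]]].
  by case: i i0 i4 => [|[|[|[|i]]]].
by rewrite (_ : (i + 1) %/ 5 = q); [exact: spt_coords | lia].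
Qed.

Lemma sD_coords m c : c \in coords (sD m) -> coord_below m c.
Proof.
case/coordsP=> p /mapP[i]; rewrite mem_iota => /andP[i0 im] -> c_p.
have /andP[ok le] := allP (sa_coords i0) c c_p.
by rewrite /coord_below ok /=; lia.
Qed.

Lemma high_index_fresh n s c : 0 < n -> s \in sD n.-1 ->
  5 * n - 4 <= coord_index c -> c \notin coords_pt s.
Proof.
move=> n0 sD hi; apply/negP => c_s.
have /andP[_ le] : coord_below n.-1 c by apply: sD_coords; apply/coordsP; exists s.
lia.
Qed.

(* No point of D_{n-1} has both x1 and alpha_{5n-8} (y2 if n = 1) as
   coordinates: b_4 has a coordinate e of low index that the point misses. *)
Lemma escape_coord n s : 0 < n -> s \in sD n.-1 ->
  exists2 e, e \in coords_pt (spt n 4) & (e \notin coords_pt s) && (coord_index e < 5 * n - 4).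
Proof.
move=> n0 /mapP[i]; rewrite mem_iota => /andP[i0 iD] ->; rewrite -/sa.
have [x1_s | x1_s] := boolP (inl (inl SX) \in coords_pt (sa i)); last first.
  by exists (inl (inl SX)); rewrite //= x1_s; lia.
exists (inl (inr (al2m8 SY SA n))); first by rewrite !inE eqxx orbT.
case: (ltnP i 4) x1_s => [i4 | /sa_spt[q [r [q0 r5 iqr ->]]]].
  by case: i i0 i4 iD => [|[|[|[|i]]]] //= *; rewrite /al2m8; case: (n =P 1) => [->|n1] /=; lia.
case: r r5 iqr => [|[|[|[|[|r]]]]] // _ iqr; rewrite /= /al2m8 ?inE /=.
by case: (n =P 1) => n1; case: (q =P 1) => q1; rewrite /= ?coord_eqE /=; lia.
Qed.

Section Matchings.
Variable n : nat.

Definition new_match (r : nat) : SCoord :=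
  match r with
  | 0 => inl (inl (SA (5 * n - 4)))
  | 1 => inl (inl (SA (5 * n - 1)))
  | 2 => inl (inr (SA (5 * n)))
  | 3 => inl (inr (SA (5 * n - 3)))
  | _ => inr (SA (5 * n - 2))
  end.

Lemma new_match_spec r : r < 5 ->
  (new_match r \in coords_pt (spt n r)) && (5 * n - 4 <= coord_index (new_match r)).
Proof.
by case: r => [|[|[|[|[|r]]]]] // _; rewrite !inE eqxx ?orbT /=; lia.
Qed.

Lemma new_match_uniq : 0 < n -> uniq (map new_match (iota 0 5)).
Proof. by move=> n0; apply: (@map_uniq _ _ coord_index) => /=; rewrite !inE; lia. Qed.

Variable e : SCoord.

Definition surplus_match (r0 r : nat) : SCoord :=
  match r, r0 with
  | 4, _ => e
  | 0, 2 | 1, 3 => new_match 4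
  | _, _ => new_match r
  end.

Definition surplus_coord (r0 : nat) : SCoord :=
  match r0 with 2 => new_match 0 | 3 => new_match 1 | _ => new_match 4 end.

Lemma surplus_match_spec r0 r : e \in coords_pt (spt n 4) -> r < 5 ->
  surplus_match r0 r \in coords_pt (spt n r) /\
  (surplus_match r0 r = e \/ 5 * n - 4 <= coord_index (surplus_match r0 r)).
Proof.
move=> e4; case: r => [|[|[|[|[|r]]]]] // _; last by split; [|left].
all: by case: r0 => [|[|[|[|r0]]]]; split; rewrite /= ?inE ?eqxx ?orbT //; right; lia.
Qed.

Lemma surplus_coord_spec r0 : r0 < 5 ->
  (surplus_coord r0 \in coords_pt (spt n r0)) && (5 * n - 4 <= coord_index (surplus_coord r0)).
Proof.
by case: r0 => [|[|[|[|[|r0]]]]] // _; rewrite /= !inE eqxx ?orbT /=; lia.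
Qed.

Lemma surplus_uniq r0 : 0 < n -> r0 < 5 -> coord_index e < 5 * n - 4 ->
  uniq (surplus_coord r0 :: map (surplus_match r0) (iota 0 5)).
Proof.
move=> n0 r05 e_low; apply: (@map_uniq _ _ coord_index).
by case: r0 r05 => [|[|[|[|[|r0]]]]] // _; rewrite /= !inE; lia.
Qed.

End Matchings.

Section Realization.
Variables (X1 X2 X3 : eqType) (x1 y1 : X1) (x2 y2 : X2) (x3 z3 : X3)
  (al1 : nat -> X1) (al2 : nat -> X2) (al3 : nat -> X3).

Definition realize (p : SOmega) : Omega X1 X2 X3 :=
  (sym_val x1 y1 al1 p.1.1, sym_val x2 y2 al2 p.1.2, sym_val x3 z3 al3 p.2).

Definition realize_coord (c : SCoord) : Coord X1 X2 X3 :=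
  match c with
  | inl (inl s) => inl (inl (sym_val x1 y1 al1 s))
  | inl (inr s) => inl (inr (sym_val x2 y2 al2 s))
  | inr s => inr (sym_val x3 z3 al3 s)
  end.

Lemma coords_pt_realize p : coords_pt (realize p) = map realize_coord (coords_pt p).
Proof. by []. Qed.

Lemma realize_pt q r : realize (spt q r) = pt x1 y2 x3 z3 al1 al2 al3 q r.
Proof. by case: r => [|[|[|[|r]]]] //; rewrite /= /al3m7 /al2m8; case: (q == 1). Qed.

Lemma realize_D m : map realize (sD m) = D x1 y1 x2 y2 x3 z3 al1 al2 al3 m.
Proof.
rewrite -map_comp; apply/eq_map => -[|[|[|[|i]]]] //=; exact: realize_pt.
Qed.

Hypotheses (Hxy1 : x1 != y1)
  (Hal1 : forall m m', 0 < m -> 0 < m' -> m %% 5 \in [:: 1; 4] -> m' %% 5 \in [:: 1; 4] ->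
            al1 m = al1 m' -> m = m')
  (Hal1x : forall m, 0 < m -> m %% 5 \in [:: 1; 4] -> (al1 m != x1) && (al1 m != y1))
  (Hxy2 : x2 != y2)
  (Hal2 : forall m m', 0 < m -> 0 < m' -> m %% 5 \in [:: 2; 0] -> m' %% 5 \in [:: 2; 0] ->
            al2 m = al2 m' -> m = m')
  (Hal2x : forall m, 0 < m -> m %% 5 \in [:: 2; 0] -> (al2 m != x2) && (al2 m != y2))
  (Hxz3 : x3 != z3)
  (Hal3 : forall m m', 0 < m -> 0 < m' -> m %% 5 == 3 -> m' %% 5 == 3 ->
            al3 m = al3 m' -> m = m')
  (Hal3x : forall m, 0 < m -> m %% 5 == 3 -> (al3 m != x3) && (al3 m != z3)).

Lemma realize_coord_inj c c' : coord_ok c -> coord_ok c' ->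
  realize_coord c = realize_coord c' -> c = c'.
Proof.
case: c c' => [[s|s]|s] [[s'|s']|s'] //= ok ok' [] E; congr (_ _).
- by congr inl; exact: (sym_val_inj (res := res1) Hxy1 Hal1 Hal1x ok ok' E).
- by congr inr; exact: (sym_val_inj (res := res2) Hxy2 Hal2 Hal2x ok ok' E).
- exact: (sym_val_inj (res := res3) Hxz3 Hal3 Hal3x ok ok' E).
Qed.

Lemma mem_realize_coord c cs : coord_ok c -> all coord_ok cs ->
  (realize_coord c \in map realize_coord cs) = (c \in cs).
Proof.
move=> ok /allP ok_cs; apply/mapP/idP => [[c' c'_cs E] | c_cs]; last by exists c.
by rewrite (realize_coord_inj ok (ok_cs c' c'_cs) E).
Qed.

Lemma sD_coord_ok m s : s \in sD m -> all coord_ok (coords_pt s).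
Proof.
move=> sD; apply/allP => c c_s.
by have /andP[] : coord_below m c by apply: sD_coords; apply/coordsP; exists s.
Qed.

Lemma mem_coords_realize_D m c : coord_ok c ->
  (realize_coord c \in coords (D x1 y1 x2 y2 x3 z3 al1 al2 al3 m)) = (c \in coords (sD m)).
Proof.
move=> ok; rewrite -realize_D; apply/coordsP/coordsP => [[_ /mapP[s sD ->]] | [s sD c_s]].
  by rewrite coords_pt_realize mem_realize_coord ?(sD_coord_ok sD) //; exists s.
by exists (realize s); rewrite ?map_f // coords_pt_realize map_f.
Qed.

Lemma count_fresh n (S : seq (Omega X1 X2 X3)) (fresh : pred (Coord X1 X2 X3))
    (m : nat -> SCoord) (E : seq SCoord) :
  0 < n -> uniq S -> {subset S <= A x1 y1 x2 y2 x3 z3 al1 al2 al3 n} ->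
  (forall r, r < 5 -> (m r \in coords_pt (spt n r)) && fresh (realize_coord (m r))) ->
  all coord_ok E -> uniq (E ++ map m (iota 0 5)) ->
  {subset map realize_coord E <= [seq c <- coords S | fresh c]} ->
  size S + size E <= size [seq c <- coords S | fresh c].
Proof.
move=> n0 uS S_A m_ok E_ok uEm E_fresh; rewrite -(size_map realize_coord E).
apply: (matching_bound (ix := iota 0 5) (P := pt x1 y2 x3 z3 al1 al2 al3 n)
                       (m := realize_coord \o m)) => //.
- by move=> p /S_A; exact: A_sub.
- rewrite map_comp -map_cat map_inj_in_uniq // => c c'.
  have ok d : d \in E ++ map m (iota 0 5) -> coord_ok d.
    rewrite mem_cat => /orP[/(allP E_ok) // | /mapP[r]].
    rewrite mem_iota => /andP[_ r5] ->.
    by case/andP: (m_ok r r5) => /(coord_ok_spt n0 r5).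
  by move=> /ok ok_c /ok ok_c'; exact: realize_coord_inj.
- move=> r; rewrite mem_iota => /andP[_ r5] Sr; case/andP: (m_ok r r5) => mr fr.
  rewrite mem_filter fr; apply/coordsP; exists (pt x1 y2 x3 z3 al1 al2 al3 n r) => //.
  by rewrite -realize_pt coords_pt_realize; exact: (map_f realize_coord mr).
Qed.

Lemma new_coords_count n S : 0 < n -> uniq S ->
  {subset S <= A x1 y1 x2 y2 x3 z3 al1 al2 al3 n} ->
  size S <= size [seq c <- coords S | c \notin coords (D x1 y1 x2 y2 x3 z3 al1 al2 al3 n.-1)].
Proof.
move=> n0 uS S_A; rewrite -[size S]addn0.
apply: (count_fresh (m := new_match n) (E := [::]) n0 uS S_A) => //; last exact: new_match_uniq.
move=> r r5; case/andP: (new_match_spec n r5) => mr hi.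
rewrite mr mem_coords_realize_D ?(coord_ok_spt n0 r5 mr) //.
apply/negP => /sD_coords /andP[_]; lia.
Qed.

Lemma surplus_coords_count n ai S : 0 < n -> ai \in D x1 y1 x2 y2 x3 z3 al1 al2 al3 n.-1 ->
  uniq S -> 0 < size S -> {subset S <= A x1 y1 x2 y2 x3 z3 al1 al2 al3 n} ->
  (size S).+1 <= size [seq c <- coords S | c \notin coords_pt ai].
Proof.
move=> n0; rewrite -realize_D => /mapP[s sD ->] uS S0 S_A.
have [r0 r05 S_r0] : exists2 r0, r0 < 5 & pt x1 y2 x3 z3 al1 al2 al3 n r0 \in S.
  case: S S0 S_A {uS} => [//|p S'] _ S_A.
  have /mapP[r0 + p_r0] := A_sub n0 (S_A p (mem_head p S')).
  by rewrite mem_iota => /andP[_ r05]; exists r0; rewrite // -p_r0 mem_head.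
have fresh_s c : coord_ok c ->
    (realize_coord c \notin coords_pt (realize s)) = (c \notin coords_pt s).
  by move=> ok; rewrite coords_pt_realize mem_realize_coord ?(sD_coord_ok sD).
have [e e4 /andP[e_fresh e_low]] := escape_coord n0 sD.
have /andP[d_r0 d_hi] := surplus_coord_spec n r05.
have d_ok := coord_ok_spt n0 r05 d_r0.
rewrite -addn1 -[1]/(size [:: surplus_coord n r0]).
apply: (count_fresh (m := surplus_match n e r0) n0 uS S_A).
- move=> r r5; have [mr m_fresh] := surplus_match_spec r0 e4 r5.
  rewrite mr fresh_s ?(coord_ok_spt n0 r5 mr) //.
  by case: m_fresh => [-> // | /(high_index_fresh n0 sD)].
- by rewrite /= d_ok.
- exact: surplus_uniq.
- move=> _ /mapP[_ /predU1P[-> | //] ->].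
  rewrite mem_filter fresh_s // (high_index_fresh n0 sD d_hi) /=.
  apply/coordsP; exists (pt x1 y2 x3 z3 al1 al2 al3 n r0) => //.
  by rewrite -realize_pt coords_pt_realize; exact: map_f.
Qed.

End Realization.

Theorem mainTheorem2 (X1 X2 X3 : eqType)
  (x1 y1 : X1) (x2 y2 : X2) (x3 z3 : X3)
  (al1 : nat -> X1) (al2 : nat -> X2) (al3 : nat -> X3)
  (Hxy1 : x1 != y1)
  (Hal1 : forall m m', 0 < m -> 0 < m' -> m %% 5 \in [:: 1; 4] -> m' %% 5 \in [:: 1; 4] ->
            al1 m = al1 m' -> m = m')
  (Hal1x : forall m, 0 < m -> m %% 5 \in [:: 1; 4] -> (al1 m != x1) && (al1 m != y1))
  (Hxy2 : x2 != y2)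
  (Hal2 : forall m m', 0 < m -> 0 < m' -> m %% 5 \in [:: 2; 0] -> m' %% 5 \in [:: 2; 0] ->
            al2 m = al2 m' -> m = m')
  (Hal2x : forall m, 0 < m -> m %% 5 \in [:: 2; 0] -> (al2 m != x2) && (al2 m != y2))
  (Hxz3 : x3 != z3)
  (Hal3 : forall m m', 0 < m -> 0 < m' -> m %% 5 == 3 -> m' %% 5 == 3 ->
            al3 m = al3 m' -> m = m')
  (Hal3x : forall m, 0 < m -> m %% 5 == 3 -> (al3 m != x3) && (al3 m != z3))
  (n : nat) (Hn : 1 <= n) :
  let Dn1 := D x1 y1 x2 y2 x3 z3 al1 al2 al3 n.-1 in
  let An := A x1 y1 x2 y2 x3 z3 al1 al2 al3 n in
  (forall S : seq (Omega X1 X2 X3), uniq S -> 1 <= size S -> {subset S <= An} ->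
     size S <= size [seq c <- coords S | c \notin coords Dn1])
  /\
  (forall ai, ai \in Dn1 ->
   forall S : seq (Omega X1 X2 X3), uniq S -> 1 <= size S -> {subset S <= An} ->
     (size S).+1 <= size [seq c <- coords S | c \notin coords_pt ai]).
Proof.
split=> [S uS _ S_A | ai ai_D S uS S0 S_A].
- exact: (new_coords_count Hxy1 Hal1 Hal1x Hxy2 Hal2 Hal2x Hxz3 Hal3 Hal3x Hn uS S_A).
- exact: (surplus_coords_count Hxy1 Hal1 Hal1x Hxy2 Hal2 Hal2x Hxz3 Hal3 Hal3x Hn ai_D uS S0 S_A).
Qed.
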